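(* Let $\Omega\subset\mathbb{R}$ be a bounded interval, let $g:\Omega\times\mathbb{R}^+\to\mathbb{R}$ be given, and for $\varepsilon>0$ let $(v,u)=(v_\varepsilon,u_\varepsilon)$ be a pair of smooth functions solving $$v_t-u_x=0,\qquad u_t-\tfrac{1}{\varepsilon^2}v_x=g(x,t)\qquad\text{on }\Omega\times\mathbb{R}^+,$$ with boundary condition $v(x,t)=0$ for all $(x,t)\in\partial\Omega\times\mathbb{R}^+$. Suppose $(v,u)$ admits a two-scale expansion $$v=v^{(0)}+\varepsilon v^{(1)}+\varepsilon^2v^{(2)}+O(\varepsilon^3),\qquad u=u^{(0)}+\varepsilon u^{(1)}+\varepsilon^2u^{(2)}+O(\varepsilon^3),$$ with smooth coefficient functions $v^{(k)},u^{(k)}$ independent of $\varepsilon$, in the sense that $\|v-v^{(0)}-\varepsilon v^{(1)}-\varepsilon^2v^{(2)}\|_{C^1}=O(\varepsilon^3)$ and $\|u-u^{(0)}-\varepsilon u^{(1)}-\varepsilon^2u^{(2)}\|_{C^1}=O(\varepsilon^3)$. Then necessarily $$v(x,t)=\varepsilon^2v^{(2)}(x,t)+O(\varepsilon^3),\qquad u(x,t)=u^{(0)}(t)+\varepsilon u^{(1)}(t)+\varepsilon^2u^{(2)}(x,t)+O(\varepsilon^3),$$ i.e. $v^{(0)}=v^{(1)}=0$ and $u^{(0)},u^{(1)}$ depend only on $t$.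
   Context: $\|\varphi\|_{C^1}:=\|\varphi\|_\infty+\|\nabla_{x,t}\varphi\|_\infty$ on $\Omega\times\mathbb{R}^+$; $O(\varepsilon^3)$ denotes a quantity bounded by a constant times $\varepsilon^3$ as $\varepsilon\to0$. *)

From Stdlib Require Import Reals List.
From Coquelicot Require Import Coquelicot.
Open Scope R_scope.

Definition PDx (f : R -> R -> R) : R -> R -> R :=
  fun x t => Derive (fun y => f y t) x.
Definition PDt (f : R -> R -> R) : R -> R -> R :=
  fun x t => Derive (fun s => f x s) t.

Fixpoint Dword (w : list bool) (f : R -> R -> R) : R -> R -> R :=
  match w with
  | nil => f
  | b :: w' => (if b then PDx else PDt) (Dword w' f)
  end.

Definition smooth2 (f : R -> R -> R) : Prop :=
  forall (w : list bool) (x t : R),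
    ex_derive (fun y => Dword w f y t) x /\
    ex_derive (fun s => Dword w f x s) t /\
    continuous (fun p : R * R => Dword w f (fst p) (snd p)) (x, t).

Definition in_dom (a b x t : R) : Prop := a < x < b /\ 0 < t.

(* ||phi||_{C^1} on Omega x R^+ is at most K:
   ||phi||_inf + ||grad phi||_inf <= K, written with explicit bounds
   A >= sup |phi| and B >= sup |grad phi|. *)
Definition C1norm_le (a b : R) (phi : R -> R -> R) (K : R) : Prop :=
  exists A B : R,
    (forall x t, in_dom a b x t -> Rabs (phi x t) <= A) /\
    (forall x t, in_dom a b x t ->
        sqrt (PDx phi x t ^ 2 + PDt phi x t ^ 2) <= B) /\
    A + B <= K.

Definition C1_O_eps3 (a b : R) (phi : R -> R -> R -> R) : Prop :=
  exists C eps0 : R, 0 < eps0 /\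
    forall eps, 0 < eps < eps0 -> C1norm_le a b (phi eps) (C * eps ^ 3).

(* Comparing powers of eps in the equations, with the expansions differentiated
   term by term: the second equation says v_x = eps^2 (u_t - g) = O(eps^2), so
   v0_x = v1_x = 0, and the boundary condition v = 0 at x = a then forces
   v0 = v1 = 0.  Consequently v_t = O(eps^2), and the first equation u_x = v_t
   gives u0_x = u1_x = 0, i.e. u0 and u1 depend on t only. *)
From Stdlib Require Import Reals Lra Lia.
From Coquelicot Require Import Coquelicot.
Open Scope R_scope.

Definition bigO (n : nat) (f : R -> R) : Prop :=
  exists K e0 : R, 0 < e0 /\ forall e, 0 < e < e0 -> Rabs (f e) <= K * e ^ n.

Lemma bigO_ext n (f g : R -> R) :
  (forall e, 0 < e -> f e = g e) -> bigO n f -> bigO n g.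
Proof.
  intros Hfg [K [e0 [He0 Hf]]]. exists K, e0. split; auto.
  intros e He. rewrite <- Hfg by lra. auto.
Qed.

Lemma bigO_const c : bigO 0 (fun _ => c).
Proof. exists (Rabs c), 1. split; [lra|]. intros e _. simpl. lra. Qed.

Lemma bigO_pow m : bigO m (fun e => e ^ m).
Proof.
  exists 1, 1. split; [lra|]. intros e He.
  rewrite Rabs_right by (apply Rle_ge, pow_le; lra). lra.
Qed.

Lemma bigO_add n (f g : R -> R) :
  bigO n f -> bigO n g -> bigO n (fun e => f e + g e).
Proof.
  intros [K [e0 [He0 Hf]]] [L [e1 [He1 Hg]]].
  exists (K + L), (Rmin e0 e1). split; [now apply Rmin_glb_lt|].
  intros e [He Hmin].
  pose proof (Rmin_l e0 e1). pose proof (Rmin_r e0 e1).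
  pose proof (Rabs_triang (f e) (g e)).
  pose proof (Hf e ltac:(lra)). pose proof (Hg e ltac:(lra)). nra.
Qed.

Lemma bigO_opp n (f : R -> R) : bigO n f -> bigO n (fun e => - f e).
Proof.
  intros [K [e0 [He0 Hf]]]. exists K, e0. split; auto.
  intros e He. rewrite Rabs_Ropp. auto.
Qed.

Lemma bigO_sub n (f g : R -> R) :
  bigO n f -> bigO n g -> bigO n (fun e => f e - g e).
Proof. intros Hf Hg. exact (bigO_add n f _ Hf (bigO_opp n g Hg)). Qed.

Lemma bigO_mul n m (f g : R -> R) :
  bigO n f -> bigO m g -> bigO (n + m) (fun e => f e * g e).
Proof.
  intros [K [e0 [He0 Hf]]] [L [e1 [He1 Hg]]].
  exists (K * L), (Rmin e0 e1). split; [now apply Rmin_glb_lt|].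
  intros e [He Hmin].
  pose proof (Rmin_l e0 e1). pose proof (Rmin_r e0 e1).
  rewrite Rabs_mult, pow_add.
  replace (K * L * (e ^ n * e ^ m)) with ((K * e ^ n) * (L * e ^ m)) by ring.
  apply Rmult_le_compat; try apply Rabs_pos; [apply Hf | apply Hg]; lra.
Qed.

Lemma bigO_weaken n m (f : R -> R) : (n <= m)%nat -> bigO m f -> bigO n f.
Proof.
  intros Hnm [K [e0 [He0 Hf]]]. exists (Rabs K), (Rmin e0 1).
  split; [apply Rmin_glb_lt; lra|].
  intros e [He Hmin]. pose proof (Rmin_l e0 1). pose proof (Rmin_r e0 1).
  replace m with (n + (m - n))%nat in Hf by lia.
  assert (Hpow : e ^ (m - n) <= 1).
  { rewrite <- (pow1 (m - n)). apply pow_incr. lra. }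
  pose proof (pow_le e n ltac:(lra)). pose proof (pow_le e (m - n) ltac:(lra)).
  pose proof (Rle_abs K). pose proof (Rabs_pos K).
  eapply Rle_trans; [apply Hf; lra|]. rewrite pow_add.
  apply Rle_trans with (Rabs K * (e ^ n * e ^ (m - n))).
  - apply Rmult_le_compat_r; [apply Rmult_le_pos |]; assumption.
  - apply Rmult_le_compat_l; [assumption|].
    rewrite <- (Rmult_1_r (e ^ n)) at 2. apply Rmult_le_compat_l; assumption.
Qed.

Lemma bigO_monomial n m c : (n <= m)%nat -> bigO n (fun e => e ^ m * c).
Proof.
  intros Hnm. apply bigO_weaken with m; auto.
  pose proof (bigO_mul m 0 _ _ (bigO_pow m) (bigO_const c)) as H.
  rewrite Nat.add_0_r in H. exact H.
Qed.

Lemma bigO_cancel n (f : R -> R) : bigO (S n) (fun e => e * f e) -> bigO n f.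
Proof.
  intros [K [e0 [He0 Hf]]]. exists K, e0. split; auto.
  intros e He. apply Rmult_le_reg_l with e; [lra|].
  specialize (Hf e He). rewrite Rabs_mult, Rabs_right in Hf by lra.
  simpl in Hf. lra.
Qed.

Lemma bigO1_const_eq0 c : bigO 1 (fun _ => c) -> c = 0.
Proof.
  intros [K [e0 [He0 Hc]]].
  apply Rabs_eq_0, Rle_antisym; [|apply Rabs_pos].
  apply Rle_plus_epsilon. intros eps Heps.
  set (e := Rmin (e0 / 2) (eps / (Rabs K + 1))).
  assert (HK : 0 < Rabs K + 1) by (pose proof (Rabs_pos K); lra).
  assert (He : 0 < e) by (apply Rmin_glb_lt; [lra | apply Rdiv_lt_0_compat; lra]).
  assert (HeK : (Rabs K + 1) * e <= eps).
  { pose proof (Rmin_r (e0 / 2) (eps / (Rabs K + 1))).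
    apply Rmult_le_compat_l with (r := Rabs K + 1) in H; [|lra].
    replace ((Rabs K + 1) * (eps / (Rabs K + 1))) with eps in H by (field; lra). exact H. }
  pose proof (Rmin_l (e0 / 2) (eps / (Rabs K + 1))).
  specialize (Hc e ltac:(unfold e in *; lra)). simpl in Hc.
  pose proof (Rle_abs K). nra.
Qed.

Lemma bigO2_affine_eq0 A B : bigO 2 (fun e => A + e * B) -> A = 0 /\ B = 0.
Proof.
  intros H.
  assert (HB : bigO 1 (fun e => e * B)).
  { apply bigO_ext with (fun e => e ^ 1 * B); [intros; ring|].
    apply bigO_monomial; lia. }
  assert (HA : A = 0).
  { apply bigO1_const_eq0, bigO_ext with (fun e => (A + e * B) - e * B); [intros; ring|].
    apply bigO_sub; [apply bigO_weaken with 2%nat; [lia|] |]; assumption. }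
  split; auto. subst A.
  apply bigO1_const_eq0, bigO_cancel.
  apply bigO_ext with (fun e => 0 + e * B); [intros; ring | assumption].
Qed.

Lemma expansion_bigO0 (F : R -> R) c0 c1 c2 :
  bigO 3 (fun e => F e - c0 - e * c1 - e ^ 2 * c2) -> bigO 0 F.
Proof.
  intros H.
  apply bigO_ext with (fun e => (F e - c0 - e * c1 - e ^ 2 * c2)
                               + e ^ 0 * c0 + e ^ 1 * c1 + e ^ 2 * c2);
    [intros; ring|].
  apply bigO_add; [apply bigO_add; [apply bigO_add |] |];
    try (apply bigO_monomial; lia).
  apply bigO_weaken with 3%nat; [lia | exact H].
Qed.

Lemma expansion_bigO2 (F : R -> R) c0 c1 c2 :
  c0 = 0 -> c1 = 0 ->
  bigO 3 (fun e => F e - c0 - e * c1 - e ^ 2 * c2) -> bigO 2 F.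
Proof.
  intros -> -> H.
  apply bigO_ext with (fun e => (F e - 0 - e * 0 - e ^ 2 * c2) + e ^ 2 * c2);
    [intros; ring|].
  apply bigO_add; [apply bigO_weaken with 3%nat; [lia | exact H] | apply bigO_monomial; lia].
Qed.

Lemma expansion_leading_eq0 (F : R -> R) c0 c1 c2 :
  bigO 3 (fun e => F e - c0 - e * c1 - e ^ 2 * c2) -> bigO 2 F ->
  c0 = 0 /\ c1 = 0.
Proof.
  intros Hexp HF. apply bigO2_affine_eq0.
  apply bigO_ext with (fun e => F e - e ^ 2 * c2 - (F e - c0 - e * c1 - e ^ 2 * c2));
    [intros; ring|].
  apply bigO_sub; [apply bigO_sub; [exact HF | apply bigO_monomial; lia] |].
  apply bigO_weaken with 3%nat; [lia | exact Hexp].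
Qed.

Lemma Rabs_le_left_endpoint (f : R -> R) a b M :
  a < b -> continuous f a ->
  (forall x, a < x < b -> Rabs (f x) <= M) -> Rabs (f a) <= M.
Proof.
  intros Hab Hc Hbound.
  destruct (Rle_lt_dec (Rabs (f a)) M) as [|Hgap]; auto. exfalso.
  assert (Hd : 0 < Rabs (f a) - M) by lra.
  destruct (proj1 (filterlim_locally f (f a)) Hc (mkposreal _ Hd)) as [d Hnear].
  pose proof (cond_pos d).
  set (x := a + Rmin (d / 2) ((b - a) / 2)).
  pose proof (Rmin_l (d / 2) ((b - a) / 2)). pose proof (Rmin_r (d / 2) ((b - a) / 2)).
  assert (0 < Rmin (d / 2) ((b - a) / 2)) by (apply Rmin_glb_lt; lra).
  assert (Hx : Rabs (f x - f a) < Rabs (f a) - M).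
  { apply (Hnear x). change (Rabs (x - a) < d). unfold x.
    rewrite Rabs_right by lra. lra. }
  pose proof (Hbound x ltac:(unfold x; lra)).
  pose proof (Rabs_triang_inv (f a) (f x)).
  rewrite Rabs_minus_sym in Hx. lra.
Qed.

Lemma Derive_eq0_const (f : R -> R) a b :
  (forall y, ex_derive f y) -> (forall y, a < y < b -> Derive f y = 0) ->
  forall x y, a <= x <= b -> a <= y <= b -> f x = f y.
Proof.
  intros Hex H0 x y Hx Hy.
  assert (Hmin : a <= Rmin x y) by (apply Rmin_glb; lra).
  assert (Hmax : Rmax x y <= b) by (apply Rmax_lub; lra).
  destruct (MVT_gen f x y (fun _ => 0)) as [c [_ Hc]].
  - intros z Hz. rewrite <- (H0 z) by lra. now apply Derive_correct.
  - intros z _. apply continuity_pt_filterlim, (ex_derive_continuous f), Hex.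
  - lra.
Qed.

Lemma Derive_vanishing_right (h : R -> R) a t :
  (forall s, a < s -> h s = 0) -> a < t -> Derive h t = 0.
Proof.
  intros H0 Ht. rewrite (Derive_ext_loc h (fun _ => 0)); [apply Derive_const|].
  exists (mkposreal (t - a) ltac:(lra)). intros s Hs.
  change (Rabs (s - t) < t - a) in Hs. apply Rabs_def2 in Hs. apply H0. lra.
Qed.

Lemma C1norm_le_pointwise a b phi K x t :
  C1norm_le a b phi K -> in_dom a b x t ->
  Rabs (phi x t) <= K /\ Rabs (PDx phi x t) <= K /\ Rabs (PDt phi x t) <= K.
Proof.
  intros [A [B [HA [HB HK]]]] Hd.
  specialize (HA x t Hd). specialize (HB x t Hd).
  destruct (sqrt_plus_sqr (PDx phi x t) (PDt phi x t)) as [Hgrad _].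
  pose proof (Rmax_l (Rabs (PDx phi x t)) (Rabs (PDt phi x t))).
  pose proof (Rmax_r (Rabs (PDx phi x t)) (Rabs (PDt phi x t))).
  pose proof (Rabs_pos (phi x t)). pose proof (Rabs_pos (PDx phi x t)).
  repeat split; lra.
Qed.

Definition residual (f : R -> R -> R -> R) (f0 f1 f2 : R -> R -> R) :
  R -> R -> R -> R :=
  fun eps x t => f eps x t - f0 x t - eps * f1 x t - eps ^ 2 * f2 x t.

Lemma Derive_residual (h h0 h1 h2 : R -> R) e y :
  ex_derive h y -> ex_derive h0 y -> ex_derive h1 y -> ex_derive h2 y ->
  Derive (fun z => h z - h0 z - e * h1 z - e ^ 2 * h2 z) y =
  Derive h y - Derive h0 y - e * Derive h1 y - e ^ 2 * Derive h2 y.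
Proof.
  intros. apply is_derive_unique. auto_derive; auto.
  change (Derive (fun x => h x) y) with (Derive h y).
  change (Derive (fun x => h0 x) y) with (Derive h0 y).
  change (Derive (fun x => h1 x) y) with (Derive h1 y).
  change (Derive (fun x => h2 x) y) with (Derive h2 y). ring.
Qed.

Lemma PDx_residual f f0 f1 f2 e x t :
  smooth2 (f e) -> smooth2 f0 -> smooth2 f1 -> smooth2 f2 ->
  PDx (residual f f0 f1 f2 e) x t =
  residual (fun e => PDx (f e)) (PDx f0) (PDx f1) (PDx f2) e x t.
Proof.
  intros S S0 S1 S2. unfold PDx, residual.
  apply Derive_residual;
    [exact (proj1 (S nil x t)) | exact (proj1 (S0 nil x t))
    | exact (proj1 (S1 nil x t)) | exact (proj1 (S2 nil x t))].
Qed.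

Lemma PDt_residual f f0 f1 f2 e x t :
  smooth2 (f e) -> smooth2 f0 -> smooth2 f1 -> smooth2 f2 ->
  PDt (residual f f0 f1 f2 e) x t =
  residual (fun e => PDt (f e)) (PDt f0) (PDt f1) (PDt f2) e x t.
Proof.
  intros S S0 S1 S2. unfold PDt, residual.
  apply Derive_residual;
    [exact (proj1 (proj2 (S nil x t))) | exact (proj1 (proj2 (S0 nil x t)))
    | exact (proj1 (proj2 (S1 nil x t))) | exact (proj1 (proj2 (S2 nil x t)))].
Qed.

Section Expansion.

Variables (a b : R) (f : R -> R -> R -> R) (f0 f1 f2 : R -> R -> R).
Hypothesis Sf : forall eps, 0 < eps -> smooth2 (f eps).
Hypotheses (S0 : smooth2 f0) (S1 : smooth2 f1) (S2 : smooth2 f2).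
Hypothesis Hexp : C1_O_eps3 a b (residual f f0 f1 f2).

Lemma expansion_PDx x t : in_dom a b x t ->
  bigO 3 (fun e => residual (fun e => PDx (f e)) (PDx f0) (PDx f1) (PDx f2) e x t).
Proof.
  intros Hd. destruct Hexp as [C [e0 [He0 HC]]].
  exists C, e0. split; auto. intros e He.
  rewrite <- PDx_residual by (auto; apply Sf; lra).
  apply (C1norm_le_pointwise a b _ _ x t (HC e He) Hd).
Qed.

Lemma expansion_PDt x t : in_dom a b x t ->
  bigO 3 (fun e => residual (fun e => PDt (f e)) (PDt f0) (PDt f1) (PDt f2) e x t).
Proof.
  intros Hd. destruct Hexp as [C [e0 [He0 HC]]].
  exists C, e0. split; auto. intros e He.
  rewrite <- PDt_residual by (auto; apply Sf; lra).
  apply (C1norm_le_pointwise a b _ _ x t (HC e He) Hd).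
Qed.

Lemma expansion_left_end t : a < b -> 0 < t ->
  bigO 3 (fun e => residual f f0 f1 f2 e a t).
Proof.
  intros Hab Ht. destruct Hexp as [C [e0 [He0 HC]]].
  exists C, e0. split; auto. intros e He.
  apply (Rabs_le_left_endpoint (fun x => residual f f0 f1 f2 e x t) a b); auto.
  - apply (ex_derive_continuous (fun x => residual f f0 f1 f2 e x t)). unfold residual.
    pose proof (proj1 (Sf e ltac:(lra) nil a t)). pose proof (proj1 (S0 nil a t)).
    pose proof (proj1 (S1 nil a t)). pose proof (proj1 (S2 nil a t)).
    simpl in *. auto_derive. auto.
  - intros x Hx. apply (C1norm_le_pointwise a b _ _ x t (HC e He) (conj Hx Ht)).
Qed.

End Expansion.

Section TwoScale.

Variables (a b : R) (g : R -> R -> R) (v u : R -> R -> R -> R)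
  (v0 v1 v2 u0 u1 u2 : R -> R -> R).
Hypothesis Hab : a < b.
Hypothesis Hsm : forall eps, 0 < eps -> smooth2 (v eps) /\ smooth2 (u eps).
Hypotheses (Sv0 : smooth2 v0) (Sv1 : smooth2 v1) (Sv2 : smooth2 v2)
  (Su0 : smooth2 u0) (Su1 : smooth2 u1) (Su2 : smooth2 u2).
Hypothesis Heq1 : forall eps x t, 0 < eps -> in_dom a b x t ->
  PDt (v eps) x t - PDx (u eps) x t = 0.
Hypothesis Heq2 : forall eps x t, 0 < eps -> in_dom a b x t ->
  PDt (u eps) x t - / eps ^ 2 * PDx (v eps) x t = g x t.
Hypothesis Hbc : forall eps t, 0 < eps -> 0 < t -> v eps a t = 0 /\ v eps b t = 0.
Hypothesis Hexp_v : C1_O_eps3 a b (residual v v0 v1 v2).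
Hypothesis Hexp_u : C1_O_eps3 a b (residual u u0 u1 u2).

Let Sv eps (He : 0 < eps) : smooth2 (v eps) := proj1 (Hsm eps He).
Let Su eps (He : 0 < eps) : smooth2 (u eps) := proj2 (Hsm eps He).

(* [v_x = eps^2 (u_t - g)] with [u_t] bounded, so [v_x = O(eps^2)]. *)
Lemma PDx_v0_v1_eq0 x t : in_dom a b x t -> PDx v0 x t = 0 /\ PDx v1 x t = 0.
Proof.
  intros Hd.
  apply (expansion_leading_eq0 (fun e => PDx (v e) x t) _ _ (PDx v2 x t));
    [exact (expansion_PDx a b v v0 v1 v2 Sv Sv0 Sv1 Sv2 Hexp_v x t Hd)|].
  apply bigO_ext with (fun e => e ^ 2 * (PDt (u e) x t - g x t)).
  - intros e He. rewrite <- (Heq2 e x t He Hd). field. lra.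
  - apply (bigO_mul 2 0); [apply bigO_pow|].
    apply bigO_sub; [|apply bigO_const].
    exact (expansion_bigO0 _ _ _ _
             (expansion_PDt a b u u0 u1 u2 Su Su0 Su1 Su2 Hexp_u x t Hd)).
Qed.

Lemma v0_v1_left_end t : 0 < t -> v0 a t = 0 /\ v1 a t = 0.
Proof.
  intros Ht.
  apply (expansion_leading_eq0 (fun e => v e a t) _ _ (v2 a t));
    [exact (expansion_left_end a b v v0 v1 v2 Sv Sv0 Sv1 Sv2 Hexp_v t Hab Ht)|].
  apply bigO_ext with (fun e => e ^ 2 * 0).
  - intros e He. rewrite (proj1 (Hbc e t He Ht)). ring.
  - apply (bigO_monomial 2 2). lia.
Qed.

Lemma v0_v1_eq0 x t : in_dom a b x t -> v0 x t = 0 /\ v1 x t = 0.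
Proof.
  intros [Hx Ht].
  assert (Hconst : forall h, smooth2 h -> (forall y, a < y < b -> PDx h y t = 0) ->
                   h x t = h a t).
  { intros h Sh Hh. apply (Derive_eq0_const (fun y => h y t) a b); try lra.
    - intros y. exact (proj1 (Sh nil y t)).
    - exact Hh. }
  destruct (v0_v1_left_end t Ht) as [Ha0 Ha1].
  split.
  - rewrite <- Ha0. apply Hconst; auto.
    intros y Hy. apply (PDx_v0_v1_eq0 y t (conj Hy Ht)).
  - rewrite <- Ha1. apply Hconst; auto.
    intros y Hy. apply (PDx_v0_v1_eq0 y t (conj Hy Ht)).
Qed.

(* [u_x = v_t = eps^2 v2_t + O(eps^3)] once [v0 = v1 = 0]. *)
Lemma PDx_u0_u1_eq0 x t : in_dom a b x t -> PDx u0 x t = 0 /\ PDx u1 x t = 0.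
Proof.
  intros Hd.
  assert (Hzero_t : forall h, (forall x t, in_dom a b x t -> h x t = 0) -> PDt h x t = 0).
  { intros h Hh. destruct Hd as [Hx Ht].
    apply (Derive_vanishing_right (fun s => h x s) 0); auto.
    intros s Hs. apply Hh. split; auto. }
  apply (expansion_leading_eq0 (fun e => PDx (u e) x t) _ _ (PDx u2 x t));
    [exact (expansion_PDx a b u u0 u1 u2 Su Su0 Su1 Su2 Hexp_u x t Hd)|].
  apply bigO_ext with (fun e => PDt (v e) x t).
  - intros e He. pose proof (Heq1 e x t He Hd). lra.
  - apply (expansion_bigO2 _ (PDt v0 x t) (PDt v1 x t) (PDt v2 x t)).
    + apply Hzero_t. intros; apply v0_v1_eq0; auto.
    + apply Hzero_t. intros; apply v0_v1_eq0; auto.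
    + exact (expansion_PDt a b v v0 v1 v2 Sv Sv0 Sv1 Sv2 Hexp_v x t Hd).
Qed.

Lemma u0_u1_const_x x y t : in_dom a b x t -> a < y < b ->
  u0 x t = u0 y t /\ u1 x t = u1 y t.
Proof.
  intros [Hx Ht] Hy.
  split; [apply (Derive_eq0_const (fun z => u0 z t) a b)
         |apply (Derive_eq0_const (fun z => u1 z t) a b)]; try lra;
    try (intros z; exact (proj1 (Su0 nil z t)));
    try (intros z; exact (proj1 (Su1 nil z t)));
    intros z Hz; apply (PDx_u0_u1_eq0 z t (conj Hz Ht)).
Qed.

End TwoScale.

Theorem lemma1
  (a b : R) (Hab : a < b)
  (g : R -> R -> R)
  (v u : R -> R -> R -> R)
  (v0 v1 v2 u0 u1 u2 : R -> R -> R)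
  (Hsm : forall eps, 0 < eps -> smooth2 (v eps) /\ smooth2 (u eps))
  (Hsmc : smooth2 v0 /\ smooth2 v1 /\ smooth2 v2 /\
          smooth2 u0 /\ smooth2 u1 /\ smooth2 u2)
  (Heq1 : forall eps x t, 0 < eps -> in_dom a b x t ->
      PDt (v eps) x t - PDx (u eps) x t = 0)
  (Heq2 : forall eps x t, 0 < eps -> in_dom a b x t ->
      PDt (u eps) x t - / eps ^ 2 * PDx (v eps) x t = g x t)
  (Hbc : forall eps t, 0 < eps -> 0 < t -> v eps a t = 0 /\ v eps b t = 0)
  (Hexp_v : C1_O_eps3 a b
      (fun eps x t => v eps x t - v0 x t - eps * v1 x t - eps ^ 2 * v2 x t))
  (Hexp_u : C1_O_eps3 a b
      (fun eps x t => u eps x t - u0 x t - eps * u1 x t - eps ^ 2 * u2 x t)) :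
  (forall x t, in_dom a b x t -> v0 x t = 0 /\ v1 x t = 0) /\
  exists U0 U1 : R -> R,
    forall x t, in_dom a b x t -> u0 x t = U0 t /\ u1 x t = U1 t.
Proof.
  destruct Hsmc as [Sv0 [Sv1 [Sv2 [Su0 [Su1 Su2]]]]].
  split.
  - apply (v0_v1_eq0 a b g v u v0 v1 v2 u0 u1 u2); assumption.
  - exists (u0 ((a + b) / 2)), (u1 ((a + b) / 2)).
    intros x t Hd.
    apply (u0_u1_const_x a b g v u v0 v1 v2 u0 u1 u2); try assumption. lra.
Qed.
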